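(* For every integer $L\geq 0$, \[ \sum_{j=-\infty}^{\infty} (-1)^j q^{j^2} \left(\frac{j+1}{3}\right) {2L+1 \brack L+j}_{q^2} = \frac{(q^3;q^6)_L}{(q;q^2)_{L+1}}\,\bigl(1-q^{2(1+2L)}\bigr). \]
   Context: For a variable $a$ and integer $n\ge 0$, $(a;q)_n=(1-a)(1-aq)\cdots(1-aq^{n-1})$ (with $(a;q)_0=1$). The $q$-binomial coefficient is ${A \brack B}_q=\frac{(q;q)_A}{(q;q)_B(q;q)_{A-B}}$ if $0\le B\le A$ are integers, and $0$ otherwise; ${A\brack B}_{q^2}$ is the same with $q$ replaced by $q^2$. $\left(\frac{j}{3}\right)$ is the Legendre symbol modulo 3: it equals $1$ if $j\equiv 1 \pmod 3$, $-1$ if $j\equiv -1\pmod 3$, and $0$ if $3\mid j$. *)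

(* The identity is an identity of rational functions in q:
   we work in the field K = Q(q) realised as fractions of integer polynomials,
   with q the indeterminate. *)
From HB Require Import structures.
From mathcomp Require Import all_boot all_order all_algebra.
Set Implicit Arguments. Unset Strict Implicit. Unset Printing Implicit Defensive.
Import Order.TTheory GRing.Theory Num.Theory.
Local Open Scope ring_scope.

Definition K : fieldType := {fraction {poly int}}.

Definition qv : K := tofrac ('X : {poly int}).

Definition qpoch (a q : K) (n : nat) : K := \prod_(i < n) (1 - a * q ^+ i).

Definition qbinom (q : K) (A B : int) : K :=
  if (0 <= B) && (B <= A) then
    qpoch q q `|A|%N / (qpoch q q `|B|%N * qpoch q q `|A - B|%N)
  else 0.

(* Legendre symbol modulo 3, valued in K *)
Definition leg3 (j : int) : K :=
  if (j %% 3)%Z == 1 then 1 else if (j %% 3)%Z == 2 then -1 else 0.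

Definition zsum (f : int -> K) (N : nat) : K :=
  \sum_(i < (2 * N).+1) f (i%:Z - N%:Z).

Definition lhs_term (q : K) (L : nat) (j : int) : K :=
  (-1) ^+ `|j|%N * q ^+ (`|j| ^ 2)%N * leg3 (j + 1)
  * qbinom (q ^+ 2) (2 * L + 1)%:Z (L%:Z + j).

(* Put k = L + j.  By the q-binomial theorem, [2L+1 brack k]_{q^2} (-1)^k q^(k^2-2Lk)
   is the coefficient of X^k in P(X) = prod_{i<=2L} (1 - q^(2i+1-2L) X), while
   (-1)^j q^(j^2) = (-1)^L q^(L^2) (-1)^k q^(k^2-2Lk) and ((j+1)/3) = chi3 (k + 2L + 1).
   Hence the sum is (-1)^L q^(L^2) psi3 (X^(2L+1) P) for the linear form psi3 mapping
   X^m to chi3 m, which kills the multiples of X^2 + X + 1.  Modulo X^2 + X + 1 the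
   factors of P pair off as (1 - X/u)(1 - uX) = -(1 + u + 1/u) X with u = q^(2i+1),
   i < L, leaving 1 - q^(2L+1) X; the resulting product is evaluated with
   (1 + u + u^2)(1 - u) = 1 - u^3. *)

From HB Require Import structures.
From mathcomp Require Import all_boot all_order all_algebra.
From mathcomp Require Import zify ring.
Import Order.TTheory GRing.Theory Num.Theory.
Set Implicit Arguments. Unset Strict Implicit. Unset Printing Implicit Defensive.
Local Open Scope ring_scope.

Definition qpochhammer (R : comNzRingType) (a q : R) (n : nat) : R :=
  \prod_(i < n) (1 - a * q ^+ i).

(* The Gaussian binomial by the q-Pascal rule: unlike [qbinom] it needs no division. *)
Fixpoint qbin (R : comNzRingType) (p : R) (n k : nat) : R :=
  match n, k with
  | _, 0 => 1
  | 0, _.+1 => 0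
  | n.+1, k.+1 => qbin p n k.+1 + p ^+ (n - k) * qbin p n k
  end.

Definition qbinomial_coef (R : comNzRingType) (p c : R) (n k : nat) : R :=
  qbin p n k * (-1) ^+ k * p ^+ 'C(k, 2) * c ^+ k.

Lemma qpochhammerSr (R : comNzRingType) (a q : R) n :
  qpochhammer a q n.+1 = qpochhammer a q n * (1 - a * q ^+ n).
Proof. by rewrite /qpochhammer big_ord_recr. Qed.

Lemma qpochhammer_neq0 (F : fieldType) (a q : F) n :
  (forall i, (i < n)%N -> a * q ^+ i != 1) -> qpochhammer a q n != 0.
Proof. by move=> aq_neq1; apply/prodf_neq0 => i _; rewrite subr_eq0 eq_sym aq_neq1. Qed.

Section GaussianBinomial.

Variables (R : comNzRingType) (p : R).

Local Notation qfact := (qpochhammer p p).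

Lemma qfact0 : qfact 0 = 1.
Proof. by rewrite /qpochhammer big_ord0. Qed.

Lemma qfactS n : qfact n.+1 = qfact n * (1 - p ^+ n.+1).
Proof. by rewrite qpochhammerSr exprS. Qed.

Lemma qbin0 n : qbin p n 0 = 1.
Proof. by case: n. Qed.

Lemma qbin_small n k : (n < k)%N -> qbin p n k = 0.
Proof. by elim: n k => [|n IHn] [|k] //= ltnk; rewrite !IHn ?mulr0 ?addr0 // ltnW. Qed.

Lemma qbin_qfact n k : (k <= n)%N ->
  qbin p n k * qfact k * qfact (n - k) = qfact n.
Proof.
elim: n k => [|n IHn] [|k] //= lekn; rewrite ?qfact0 ?mulr1 ?mul1r ?subn0 //.
rewrite subSS; have [ltkn|->] : (k < n)%N \/ k = n by lia.
- have E1 := IHn k.+1 ltkn; have E2 := IHn k (ltnW ltkn).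
  set m := (n - k.+1)%N; have def_nk : (n - k = m.+1)%N by rewrite subnSK.
  rewrite def_nk !qfactS in E1 E2 *.
  have -> : p ^+ n.+1 = p ^+ m.+1 * p ^+ k.+1 by rewrite -exprD; congr (_ ^+ _); lia.
  transitivity (qfact n * (1 - p ^+ m.+1) + p ^+ m.+1 * qfact n * (1 - p ^+ k.+1)).
    by rewrite -{1}E1 -E2; ring.
  by ring.
- rewrite qbin_small // add0r subnn expr0 mul1r qfact0 mulr1 qfactS mulrA.
  by rewrite -[in RHS](IHn n) // subnn qfact0 mulr1.
Qed.

Lemma qbinomial_coefS c n k : (k <= n)%N ->
  qbinomial_coef p c n.+1 k.+1 =
  qbinomial_coef p c n k.+1 - c * p ^+ n * qbinomial_coef p c n k.
Proof.
move=> lekn; rewrite /qbinomial_coef /= binS bin1 exprD.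
have -> : p ^+ n = p ^+ (n - k) * p ^+ k by rewrite -exprD subnK.
rewrite !exprS; ring.
Qed.

Theorem qbinomial_theorem c n :
  \prod_(i < n) (1 - (c * p ^+ i)%:P * 'X) =
  \sum_(k < n.+1) (qbinomial_coef p c n k)%:P * 'X^k.
Proof.
have coef0 m : qbinomial_coef p c m 0 = 1 by rewrite /qbinomial_coef qbin0 !mulr1.
elim: n => [|n IHn]; first by rewrite big_ord0 big_ord1 coef0 mulr1.
have extend : \sum_(k < n.+1) (qbinomial_coef p c n k)%:P * 'X^k =
              \sum_(k < n.+2) (qbinomial_coef p c n k)%:P * 'X^k.
  by rewrite [RHS]big_ord_recr /= /qbinomial_coef qbin_small // !mul0r addr0.
rewrite big_ord_recr /= IHn [in RHS]big_ord_recl.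
under [in RHS]eq_bigr => i _ do rewrite lift0 qbinomial_coefS -1?ltnS // polyCB mulrBl.
rewrite sumrB addrA mulrBr mulr1 {1}extend big_ord_recl !coef0; congr (_ - _).
rewrite mulr_suml; apply: eq_bigr => i _; rewrite !polyCM exprS; ring.
Qed.

End GaussianBinomial.

Definition chi3 (R : comNzRingType) (m : nat) : R :=
  if (m %% 3 == 1)%N then 1 else if (m %% 3 == 2)%N then -1 else 0.
Arguments chi3 {R} m.

(* For a primitive cube root of unity w, chi3 m = (w^m - w^(2m)) / (w - w^2), so
   psi3 P = (P(w) - P(w^2)) / (w - w^2); using coefficients avoids adjoining w. *)
Definition psi3 (R : comNzRingType) (P : {poly R}) : R :=
  \sum_(i < size P) P`_i * chi3 i.

Definition cyclo3 (R : comNzRingType) : {poly R} := 'X^2 + 'X + 1.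
Arguments cyclo3 {R}.

Definition eqmod_cyclo3 (R : comNzRingType) (P Q : {poly R}) : Prop :=
  exists C, P - Q = cyclo3 * C.

Section CubeRootFunctional.

Variable R : comNzRingType.
Implicit Types (P Q C : {poly R}) (a u v : R).

Lemma chi3_period_sum i : chi3 (i + 2) + chi3 (i + 1) + chi3 (i + 0) = 0 :> R.
Proof.
rewrite /chi3 -!(modnDml i).
by case: (i %% 3)%N (ltn_pmod i (isT : (0 < 3)%N)) => [|[|[|r]]] //= _; ring.
Qed.

Lemma psi3_sum_bound P n : (size P <= n)%N -> psi3 P = \sum_(i < n) P`_i * chi3 i.
Proof.
move=> le_Pn; rewrite /psi3 -(subnKC le_Pn) big_split_ord /=.
rewrite [X in _ = _ + X]big1 ?addr0 // => i _.
by rewrite nth_default ?mul0r // leq_addr.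
Qed.

Lemma psi3D P Q : psi3 (P + Q) = psi3 P + psi3 Q.
Proof.
set n := maxn (size P) (size Q).
rewrite (psi3_sum_bound (size_polyD P Q)) (@psi3_sum_bound P n) ?leq_maxl //.
rewrite (@psi3_sum_bound Q n) ?leq_maxr // -big_split.
by apply: eq_bigr => i _; rewrite coefD mulrDl.
Qed.

Lemma psi3_mulC a P : psi3 (a%:P * P) = a * psi3 P.
Proof.
rewrite mul_polyC (psi3_sum_bound (size_scale_leq a P)) /psi3 mulr_sumr.
by apply: eq_bigr => i _; rewrite coefZ mulrA.
Qed.

Lemma psi3_sum (I : Type) (r : seq I) (S : pred I) (F : I -> {poly R}) :
  psi3 (\sum_(i <- r | S i) F i) = \sum_(i <- r | S i) psi3 (F i).
Proof.
by apply: (big_morph (@psi3 R) psi3D); rewrite /psi3 size_poly0 big_ord0.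
Qed.

Lemma psi3Xn k : psi3 ('X^k : {poly R}) = chi3 k.
Proof.
rewrite (@psi3_sum_bound _ k.+1) ?size_polyXn // big_ord_recr /= coefXn eqxx mul1r.
by rewrite big1 ?add0r // => i _; rewrite coefXn ltn_eqF ?mul0r.
Qed.

Lemma psi3_mulXn P k : psi3 (P * 'X^k) = \sum_(i < size P) P`_i * chi3 (i + k).
Proof.
rewrite -{1}(coefK P) poly_def mulr_suml psi3_sum.
by apply: eq_bigr => i _; rewrite -mul_polyC -mulrA -exprD psi3_mulC psi3Xn.
Qed.

Lemma psi3_cyclo3_mul C : psi3 (cyclo3 * C) = 0.
Proof.
have -> : cyclo3 * C = C * 'X^2 + C * 'X^1 + C * 'X^0 by rewrite /cyclo3; ring.
rewrite !psi3D !psi3_mulXn -!big_split big1 // => i _.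
by rewrite /= -!mulrDr chi3_period_sum mulr0.
Qed.

Lemma psi3_eqmod P Q : eqmod_cyclo3 P Q -> psi3 P = psi3 Q.
Proof.
by case=> C /eqP; rewrite subr_eq => /eqP->; rewrite psi3D psi3_cyclo3_mul add0r.
Qed.

Lemma eqmod_cyclo3_refl P : eqmod_cyclo3 P P.
Proof. by exists 0; rewrite subrr mulr0. Qed.

Lemma eqmod_cyclo3M P1 Q1 P2 Q2 :
  eqmod_cyclo3 P1 Q1 -> eqmod_cyclo3 P2 Q2 -> eqmod_cyclo3 (P1 * P2) (Q1 * Q2).
Proof.
move=> [C1 /eqP]; rewrite subr_eq => /eqP->; move=> [C2 /eqP]; rewrite subr_eq => /eqP->.
by exists (C1 * (cyclo3 * C2 + Q2) + Q1 * C2); ring.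
Qed.

Lemma eqmod_cyclo3_prod (I : Type) (r : seq I) (S : pred I) (F G : I -> {poly R}) :
  (forall i, S i -> eqmod_cyclo3 (F i) (G i)) ->
  eqmod_cyclo3 (\prod_(i <- r | S i) F i) (\prod_(i <- r | S i) G i).
Proof.
move=> FG; apply: big_ind2 => //; first exact: eqmod_cyclo3_refl.
by move=> P1 Q1 P2 Q2; apply: eqmod_cyclo3M.
Qed.

Lemma eqmod_cyclo3_pair u v : u * v = 1 ->
  eqmod_cyclo3 ((1 - v%:P * 'X) * (1 - u%:P * 'X)) ((- (1 + u + v))%:P * 'X).
Proof.
move=> uv1; exists 1.
rewrite /cyclo3 mulr1; transitivity (1 + 'X + (u * v)%:P * 'X^2).
  by rewrite polyCN !polyCD polyCM; ring.
by rewrite uv1 polyC1; ring.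
Qed.

End CubeRootFunctional.

Lemma psi3_qbinomial (R : comNzRingType) (p c : R) n m :
  psi3 (\prod_(i < n) (1 - (c * p ^+ i)%:P * 'X) * 'X^m) =
  \sum_(k < n.+1) qbinomial_coef p c n k * chi3 (k + m).
Proof.
rewrite qbinomial_theorem mulr_suml psi3_sum; apply: eq_bigr => k _.
by rewrite -mulrA -exprD psi3_mulC psi3Xn.
Qed.

Section OddPowers.

Variables (F : fieldType) (q : F).
Hypothesis q_neq0 : q != 0.

Local Notation u i := (q ^+ (2 * i + 1)).

Lemma odd_pow_neq0 i : u i != 0.
Proof. exact: expf_neq0. Qed.

Lemma prod_odd_powers_eqmod_cyclo3 L :
  eqmod_cyclo3 (\prod_(i < (2 * L).+1) (1 - (q / q ^+ (2 * L) * (q ^+ 2) ^+ i)%:P * 'X))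
    (((-1) ^+ L * \prod_(i < L) (1 + u i + (u i)^-1))%:P * 'X^L * (1 - (u L)%:P * 'X)).
Proof.
set f := fun i => 1 - (q / q ^+ (2 * L) * (q ^+ 2) ^+ i)%:P * 'X.
rewrite (_ : \prod_(i < _) _ = \prod_(i < (2 * L).+1) f i) //.
have f_pow k : f k = 1 - (q ^+ (2 * k + 1) / q ^+ (2 * L))%:P * 'X.
  by rewrite /f mulrAC -exprM -exprS addn1.
have splitL : \prod_(i < (2 * L).+1) f i =
              (\prod_(i < L) (f (L - i.+1)%N * f (L + i)%N)) * f (2 * L)%N.
  rewrite big_ord_recr /=; have -> : (2 * L = L + L)%N by lia.
  rewrite big_split_ord big_split /=; congr (_ * _ * _).
  by rewrite -(big_mkord xpredT f) big_rev_mkord subn0.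
have f_up i : f (L + i)%N = 1 - (u i)%:P * 'X.
  rewrite f_pow; congr (1 - _%:P * 'X).
  apply: (mulIf (expf_neq0 (2 * L) q_neq0)).
  by rewrite divfK ?expf_neq0 // -exprD; congr (_ ^+ _); lia.
have f_last : f (2 * L)%N = 1 - (u L)%:P * 'X by rewrite -f_up addnn mul2n.
have f_down i : (i < L)%N -> f (L - i.+1)%N = 1 - (u i)^-1%:P * 'X.
  move=> ltiL; rewrite f_pow; congr (1 - _%:P * 'X).
  have -> : q ^+ (2 * L) = q ^+ (2 * (L - i.+1) + 1) * u i.
    by rewrite -exprD; congr (_ ^+ _); lia.
  by rewrite invfM mulrA divff ?mul1r ?odd_pow_neq0.
rewrite splitL; apply: eqmod_cyclo3M; last first.
  by rewrite f_last; apply: eqmod_cyclo3_refl.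
have -> : ((-1) ^+ L * \prod_(i < L) (1 + u i + (u i)^-1))%:P * 'X^L =
          \prod_(i < L) ((- (1 + u i + (u i)^-1))%:P * 'X).
  by rewrite big_split /= prodr_const card_ord -rmorph_prod prodrN card_ord.
apply: eqmod_cyclo3_prod => i _; rewrite f_down // f_up.
by apply: eqmod_cyclo3_pair; rewrite mulfV ?odd_pow_neq0.
Qed.

Lemma psi3_prod_odd_powers L :
  psi3 (\prod_(i < (2 * L).+1) (1 - (q / q ^+ (2 * L) * (q ^+ 2) ^+ i)%:P * 'X)
        * 'X^((2 * L).+1)) =
  (-1) ^+ L * \prod_(i < L) (1 + u i + (u i)^-1) * (1 + u L).
Proof.
rewrite (psi3_eqmod (eqmod_cyclo3M (prod_odd_powers_eqmod_cyclo3 L) (eqmod_cyclo3_refl _))).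
set B := _ * \prod_(i < L) _.
have -> : B%:P * 'X^L * (1 - (u L)%:P * 'X) * 'X^((2 * L).+1) =
          B%:P * 'X^((3 * L).+1) + (- (B * u L))%:P * 'X^((3 * L).+2).
  have XE : 'X^((3 * L).+1) = 'X^L * 'X^((2 * L).+1) :> {poly F}.
    by rewrite -exprD; congr (_ ^+ _); lia.
  by rewrite polyCN (polyCM B) (exprS _ (3 * L).+1) XE; ring.
have chi3_1 : chi3 (3 * L).+1 = 1 :> F by rewrite /chi3 (_ : (3 * L).+1 %% 3 = 1)%N //; lia.
have chi3_2 : chi3 (3 * L).+2 = -1 :> F by rewrite /chi3 (_ : (3 * L).+2 %% 3 = 2)%N //; lia.
by rewrite (@psi3D F) !(@psi3_mulC F) !(@psi3Xn F) chi3_1 chi3_2; ring.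
Qed.

Lemma expr_sq_prod_odd L : q ^+ (L ^ 2) = \prod_(i < L) u i.
Proof.
elim: L => [|L IHL]; first by rewrite big_ord0 expr0.
by rewrite big_ord_recr /= -IHL -exprD; congr (_ ^+ _); nia.
Qed.

Lemma qpochhammer_odd_cubes L :
  qpochhammer (q ^+ 3) (q ^+ 6) L =
  q ^+ (L ^ 2) * \prod_(i < L) (1 + u i + (u i)^-1) * qpochhammer q (q ^+ 2) L.
Proof.
rewrite expr_sq_prod_odd /qpochhammer -!big_split /=; apply: eq_bigr => i _.
have -> : q ^+ 3 * (q ^+ 6) ^+ i = u i ^+ 3 by rewrite -!exprM -exprD; congr (_ ^+ _); lia.
have -> : q * (q ^+ 2) ^+ i = u i by rewrite -exprM -exprS addn1.
field.
exact: odd_pow_neq0.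
Qed.

Hypothesis q_neq1 : forall n, q ^+ n.+1 != 1.

Lemma odd_powers_closed_form L :
  (-1) ^+ L * q ^+ (L ^ 2) * ((-1) ^+ L * \prod_(i < L) (1 + u i + (u i)^-1) * (1 + u L)) =
  qpochhammer (q ^+ 3) (q ^+ 6) L / qpochhammer q (q ^+ 2) L.+1 * (1 - q ^+ (2 * (1 + 2 * L))).
Proof.
have Q_neq0 : qpochhammer q (q ^+ 2) L != 0.
  by apply: qpochhammer_neq0 => i _; rewrite -exprM -exprS.
have uL_neq1 : 1 - u L != 0 by rewrite subr_eq0 eq_sym addn1.
have -> : q ^+ (2 * (1 + 2 * L)) = u L ^+ 2 by rewrite -exprM; congr (_ ^+ _); lia.
have qL : q * (q ^+ 2) ^+ L = u L by rewrite -exprM -exprS addn1.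
rewrite qpochhammer_odd_cubes qpochhammerSr qL.
set P := \prod_(i < L) _.
transitivity ((-1) ^+ L * (-1) ^+ L * (q ^+ (L ^ 2) * P * (1 + u L))); first by ring.
rewrite -expr2 sqrr_sign mul1r.
field.
by rewrite Q_neq0 uL_neq1.
Qed.

End OddPowers.

Lemma bin2_double k : (2 * 'C(k, 2) + k = k ^ 2)%N.
Proof. by elim: k => // k IHk; rewrite binS bin1; lia. Qed.

Lemma signr_distn (R : comNzRingType) (k L : nat) :
  (-1) ^+ `|k%:Z - L%:Z|%N = (-1) ^+ L * (-1) ^+ k :> R.
Proof.
rewrite -signr_odd -[(-1) ^+ L]signr_odd -[(-1) ^+ k]signr_odd -signr_addb; congr (_ ^+ _).
case: (leqP k L) => [lekL|/ltnW leLk]; first by rewrite distnEr // oddB.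
by rewrite distnEl // oddB // addbC.
Qed.

Lemma leg3_nat m : leg3 m%:Z = chi3 m.
Proof. by rewrite /leg3 modz_nat /chi3; case: (m %% 3)%N => [|[|[|]]]. Qed.

Lemma leg3D3 (j z : int) : leg3 (j + z * 3) = leg3 j.
Proof. by rewrite /leg3 addrC modzMDl. Qed.

Lemma qpochE : qpoch = @qpochhammer K.
Proof. by []. Qed.

Lemma qbinom_qbin (q : K) : (forall n, q ^+ n.+1 != 1) ->
  forall n k : nat, (k <= n)%N -> qbinom q n k = qbin q n k.
Proof.
move=> q_neq1 n k lekn.
have qfact_neq0 m : qpochhammer q q m != 0.
  by apply: qpochhammer_neq0 => i _; rewrite -exprS.
rewrite /qbinom ifT; last by apply/andP; split; lia.
rewrite subzn // !absz_nat !qpochE -(qbin_qfact q lekn) -mulrA mulfK //.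
by rewrite mulf_neq0.
Qed.

Lemma lhs_term_shift (q : K) L k : q != 0 -> (forall n, q ^+ n.+1 != 1) ->
  (k <= (2 * L).+1)%N ->
  lhs_term q L (k%:Z - L%:Z) = (-1) ^+ L * q ^+ (L ^ 2) *
    (qbinomial_coef (q ^+ 2) (q / q ^+ (2 * L)) (2 * L).+1 k * chi3 (k + (2 * L).+1)).
Proof.
move=> q_neq0 q_neq1 lek.
have q2_neq1 n : (q ^+ 2) ^+ n.+1 != 1 by rewrite -exprM mulnS; exact: q_neq1.
have exp_shift : q ^+ (`|k%:Z - L%:Z|%N ^ 2) =
                 q ^+ (L ^ 2) * (q ^+ 2) ^+ 'C(k, 2) * (q / q ^+ (2 * L)) ^+ k.
  apply: (mulIf (expf_neq0 (2 * L * k) q_neq0)).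
  rewrite expr_div_n -!exprM mulrA divfK; last exact: expf_neq0.
  rewrite -!exprD; congr (_ ^+ _).
  by move: (sqrn_dist k L) (bin2_double k); lia.
rewrite /lhs_term [L%:Z + _]addrCA subrr addr0 (qbinom_qbin q2_neq1); last by rewrite addn1.
rewrite addn1 -(leg3D3 _ L) (_ : _ + _ * 3 = (k + (2 * L).+1)%N%:Z); last by lia.
rewrite leg3_nat signr_distn exp_shift /qbinomial_coef.
ring.
Qed.

Lemma lhs_term_support (q : K) L (j : int) :
  ~~ (- L%:Z <= j <= L%:Z + 1) -> lhs_term q L j = 0.
Proof.
move=> j_out; rewrite /lhs_term /qbinom ifF ?mulr0 //.
by apply/negbTE; apply: contra j_out => /andP[]; lia.
Qed.

Lemma zsum_finite_support (f : int -> K) (L M : nat) :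
  (forall j, ~~ (- L%:Z <= j <= L%:Z + 1) -> f j = 0) -> (L < M)%N ->
  zsum f M = \sum_(k < (2 * L).+2) f (k%:Z - L%:Z).
Proof.
move=> f_supp ltLM; rewrite /zsum.
have -> : ((2 * M).+1 = (M - L) + (2 * L).+2 + (M - L.+1))%N by lia.
rewrite !big_split_ord /= [X in X + _ + _]big1 ?add0r; last first.
  by move=> i _; apply: f_supp; have := ltn_ord i; lia.
rewrite [X in _ + X]big1 ?addr0; last first.
  by move=> i _; apply: f_supp; have := ltn_ord i; lia.
by apply: eq_bigr => i _; congr f; lia.
Qed.

Lemma zsum_lhs_term (q : K) L M : q != 0 -> (forall n, q ^+ n.+1 != 1) -> (L < M)%N ->
  zsum (lhs_term q L) M =
  qpoch (q ^+ 3) (q ^+ 6) L / qpoch q (q ^+ 2) L.+1 * (1 - q ^+ (2 * (1 + 2 * L))).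
Proof.
move=> q_neq0 q_neq1 ltLM.
rewrite (zsum_finite_support (@lhs_term_support q L)) //.
under eq_bigr => k _ do rewrite (lhs_term_shift q_neq0 q_neq1 (ltn_ord k)).
rewrite -mulr_sumr -psi3_qbinomial (psi3_prod_odd_powers q_neq0 L).
exact: odd_powers_closed_form.
Qed.

Lemma qv_neq0 : qv != 0.
Proof. by rewrite /qv tofrac_eq0 polyX_eq0. Qed.

Lemma qv_expS_neq1 n : qv ^+ n.+1 != 1.
Proof.
rewrite /qv -tofracXn -tofrac1 tofrac_eq.
by apply/eqP => /(congr1 (size : {poly int} -> nat)); rewrite size_polyXn size_poly1.
Qed.

Theorem theorem2p3 (L : nat) :
  exists N0 : nat, forall N : nat, (N0 <= N)%N ->
    zsum (lhs_term qv L) N =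
    qpoch (qv ^+ 3) (qv ^+ 6) L / qpoch qv (qv ^+ 2) L.+1
    * (1 - qv ^+ (2 * (1 + 2 * L))).
Proof.
exists L.+1 => N leLN.
exact: zsum_lhs_term qv_neq0 qv_expS_neq1 leLN.
Qed.
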